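(* Let $A\in\mathbb{R}^{m\times n}$ have no zero row, with rows $a_1^T,\dots,a_m^T$, let ${\bf u}=(\mu_1,\dots,\mu_m)\in\mathbb{R}^m$, let $P_k(\mu_k)=I-\mu_k a_ka_k^T/\|a_k\|_2^2$, $Q_i({\bf u}_i)=P_m(\mu_m)\cdots P_{i+1}(\mu_{i+1})$ for $1\le i\le m-1$ and $Q_m({\bf u}_m)=I$. Let $h_{k,l}=a_k^Ta_l/\|a_l\|_2^2$. For $1\le i<j\le m$ define $$d_{i,j}({\bf u}_i)=\sum_{v=2}^{j-i+1}(-1)^{v-1}\sum_{i=t_1<t_2<\dots<t_v=j}\ \prod_{s=1}^{v-1}\mu_{t_{s+1}}\prod_{s=1}^{v-1}h_{t_s,t_{s+1}},$$ where the inner sum is over all strictly increasing integer sequences $t_1<\dots<t_v$ with $t_1=i$, $t_v=j$. Then for every $1\le i\le m$ and every $\tilde x\in N(A)^\perp$, $$a_i^T[Q_i({\bf u}_i)]^T\tilde x=\big(1,d_{i,i+1}({\bf u}_i),\dots,d_{i,m}({\bf u}_i)\big)\big(a_i^T,a_{i+1}^T,\dots,a_m^T\big)^T\tilde x,$$ and the compatible vector of $Q_i({\bf u}_i)a_i$ on $A$ is $(0,\dots,0,1,d_{i,i+1}({\bf u}_i),\dots,d_{i,m}({\bf u}_i))$ (with the $1$ in position $i$), i.e. $Q_i({\bf u}_i)a_i=a_i+\sum_{j=i+1}^m d_{i,j}({\bf u}_i)a_j$.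
   Context: ${\bf u}_i=(\mu_{i+1},\dots,\mu_m)$. $N(A)^\perp$ is the orthogonal complement of the null space of $A$. *)

(* Indices are 0-based: paper index k in 1..m is 'I_m element k-1. *)
From HB Require Import structures.
From mathcomp Require Import all_boot all_order all_algebra.
Set Implicit Arguments. Unset Strict Implicit. Unset Printing Implicit Defensive.
Import Order.TTheory GRing.Theory Num.Theory.
Local Open Scope ring_scope.

Section Defs.
Variables (R : realFieldType) (m n : nat) (A : 'M[R]_(m, n)).

Definition acol (k : 'I_m) : 'cV[R]_n := (row k A)^T.

Definition nrm2 (k : 'I_m) : R := \sum_(j < n) A k j ^+ 2.

Definition Pk (k : 'I_m) (mu : R) : 'M[R]_n :=
  1%:M - (mu / nrm2 k) *: (acol k *m (acol k)^T).

Definition Qi (u : 'rV[R]_m) (i : 'I_m) : 'M[R]_n :=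
  foldr (fun k M => M *m Pk k (u 0 k)) 1%:M [seq k : 'I_m <- enum 'I_m | (i < k)%N].

Definition hkl (k l : 'I_m) : R := (\sum_(j < n) A k j * A l j) / nrm2 l.

Definition dij (u : 'rV[R]_m) (i j : 'I_m) : R :=
  \sum_(2 <= v < (j - i).+2)
    (-1) ^+ (v - 1) *
    \sum_(t : v.-tuple 'I_m |
           [&& sorted (fun x y : 'I_m => (x < y)%N) t,
               head i t == i & last i t == j])
      ((\prod_(s < v.-1) u 0 (nth i t s.+1)) *
       (\prod_(s < v.-1) hkl (nth i t s) (nth i t s.+1))).

Definition in_null_perp (x : 'cV[R]_n) : Prop :=
  forall y : 'cV[R]_n, A *m y = 0 -> x^T *m y = 0.

Definition compat_vec (u : 'rV[R]_m) (i : 'I_m) : 'rV[R]_m :=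
  \row_(j < m) (if j == i then 1 else if (i < j)%N then dij u i j else 0).

End Defs.

(* Write Q_i a_i = sum_j D_ij a_j. Peeling the factor P_{i+1} off Q_i gives
   Q_i b = b - sum_{k > i} mu_k (a_k^T b / ||a_k||^2) Q_k a_k, so by downward
   induction on i the coefficients satisfy D = I - N D, where N_ik = mu_k h_ik
   for i < k and 0 otherwise. As N is strictly upper triangular,
   D = (I + N)^-1 = sum_v (-N)^v, and the (i, j) entry of (-N)^v is (-1)^v times
   the weighted sum over increasing paths i = t_1 < ... < t_{v+1} = j: this is
   d_ij for i < j, 1 for j = i and 0 for j < i. The identity for a_i^T Q_i^T x is
   the transpose of the one for Q_i a_i, so it holds for every x. *)

From HB Require Import structures.
From mathcomp Require Import all_boot all_order all_algebra.
From mathcomp Require Import zify.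
Set Implicit Arguments.
Unset Strict Implicit.
Unset Printing Implicit Defensive.
Import Order.TTheory GRing.Theory Num.Theory.
Local Open Scope ring_scope.

Section PathSums.
Variables (R : comPzRingType) (m : nat) (c : 'I_m -> 'I_m -> R).

Fixpoint path_weight (s : seq 'I_m) : R :=
  if s is x :: s' then (if s' is y :: _ then c x y * path_weight s' else 1) else 1.

Lemma path_weightE (z : 'I_m) (t : seq 'I_m) :
  \prod_(s < (size t).-1) c (nth z t s) (nth z t s.+1) = path_weight t.
Proof.
elim: t => [|x [|y t] IH]; rewrite ?big_ord0 // big_ord_recl.
rewrite -[RHS]/(c x y * path_weight (y :: t)) -IH; congr (_ * _).
Qed.

Definition increasing_path (i j : 'I_m) (t : seq 'I_m) : bool :=
  [&& sorted (fun x y : 'I_m => (x < y)%N) t, head i t == i & last i t == j].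

Definition path_sum v i j : R :=
  \sum_(t : v.-tuple 'I_m | increasing_path i j t) path_weight t.

Lemma path_sum_cons v i j :
  path_sum v.+1 i j =
  \sum_(t : v.-tuple 'I_m | increasing_path i j (i :: t)) path_weight (i :: t).
Proof.
rewrite /path_sum (reindex_onto (cons_tuple i) (@behead_tuple _ _)) /=.
  apply: eq_bigl => t.
  have -> : behead_tuple (cons_tuple i t) = t by apply: val_inj.
  by rewrite eqxx andbT.
move=> t /and3P[_ /eqP head_t _]; apply: val_inj => /=.
by case: t head_t => [[|x s] //= _] ->.
Qed.

Lemma path_sum1 i j : path_sum 1 i j = (i == j)%:R.
Proof.
rewrite path_sum_cons big_mkcond (big_pred1 [tuple]) => [|t]; last first.
  by apply/esym/eqP/tuple0.
by rewrite /increasing_path /= eqxx; case: (i == j).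
Qed.

Lemma path_sumSS v i j :
  path_sum v.+2 i j = \sum_(k : 'I_m | (i < k)%N) c i k * path_sum v.+1 k j.
Proof.
rewrite path_sum_cons (partition_big (fun t : v.+1.-tuple 'I_m => head i t)
                                 (fun k : 'I_m => (i < k)%N)); last first.
  by move=> t; case: t => [[|y s] //= _] /and3P[/andP[]].
apply: eq_bigr => k ik; rewrite /path_sum big_distrr /=.
apply: eq_big => t; case: t => [[|y s] //= _]; last by move=> /andP[_ /eqP ->].
rewrite /increasing_path /= eqxx /=.
by case: (y =P k) => [->|_]; rewrite ?ik ?andbT ?andbF.
Qed.

Lemma path_sum_eq0 v (k j : 'I_m) : (j < k + v)%N -> path_sum v.+1 k j = 0.
Proof.
elim: v k => [|v IH] k lt_j.
  by rewrite path_sum1; case: eqP => // jk; rewrite jk addn0 ltnn in lt_j.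
by rewrite path_sumSS big1 // => l kl; rewrite IH ?mulr0 //; lia.
Qed.

(* Increasing paths in 'I_m have at most m vertices, so this sum is the whole series. *)
Definition alt_path_sum i j : R := \sum_(0 <= v < m) (-1) ^+ v * path_sum v.+1 i j.

Lemma alt_path_sum_rec i j :
  alt_path_sum i j = (i == j)%:R - \sum_(k : 'I_m | (i < k)%N) c i k * alt_path_sum k j.
Proof.
have m_gt0 : (0 < m)%N by apply: leq_ltn_trans (ltn_ord i).
rewrite /alt_path_sum big_ltn // expr0 mul1r path_sum1 big_add1 /=; congr (_ + _).
under eq_bigr do rewrite path_sumSS big_distrr /=.
rewrite exchange_big /= -sumrN; apply: eq_bigr => k ik.
rewrite -(prednK m_gt0) big_nat_recr //= path_sum_eq0 ?mulr0 ?addr0; last first.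
  by have := ltn_ord j; lia.
rewrite big_distrr -sumrN; apply: eq_bigr => v _.
by rewrite exprS mulN1r mulNr mulrCA.
Qed.

Lemma alt_path_sum_lt (i j : 'I_m) : (j < i)%N -> alt_path_sum i j = 0.
Proof.
by move=> ji; rewrite /alt_path_sum big1 // => v _; rewrite path_sum_eq0 ?mulr0 //; lia.
Qed.

Lemma alt_path_sum_id i : alt_path_sum i i = 1.
Proof.
rewrite alt_path_sum_rec eqxx big1 ?subr0 // => k ik.
by rewrite alt_path_sum_lt ?mulr0.
Qed.

Lemma alt_path_sum_gt (i j : 'I_m) : (i < j)%N ->
  alt_path_sum i j = \sum_(2 <= v < (j - i).+2) (-1) ^+ (v - 1) * path_sum v i j.
Proof.
move=> ij; have m_gt0 : (0 < m)%N by apply: leq_ltn_trans (ltn_ord i).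
have /negbTE j_neq_i : i != j by rewrite -val_eqE neq_ltn ij.
rewrite /alt_path_sum big_ltn // path_sum1 j_neq_i mulr0 add0r.
rewrite (@big_cat_nat _ _ _ (j - i).+1) //=; last by have := ltn_ord j; lia.
rewrite [X in _ + X]big_nat_cond [X in _ + X]big1 ?addr0; last first.
  by move=> v /andP[/andP[lt_v _] _]; rewrite path_sum_eq0 ?mulr0 //; lia.
by rewrite [RHS]big_add1; apply: eq_bigr => v _; rewrite subn1.
Qed.

End PathSums.

Section Projections.
Variables (R : realFieldType) (m n : nat) (A : 'M[R]_(m, n)) (u : 'rV[R]_m).

Definition proj_coef k (b : 'cV[R]_n) : R := ((acol A k)^T *m b) 0 0 / nrm2 A k.

Lemma Pk_mulmx k mu b : Pk A k mu *m b = b - (mu * proj_coef k b) *: acol A k.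
Proof.
rewrite /Pk mulmxBl mul1mx -scalemxAl -mulmxA [(acol A k)^T *m b]mx11_scalar.
by rewrite mul_mx_scalar scalerA mulrAC mulrA.
Qed.

Lemma proj_coef_acol i k : proj_coef k (acol A i) = hkl A i k.
Proof.
rewrite /proj_coef /hkl mxE; congr (_ / _); apply: eq_bigr => j _.
by rewrite /acol trmxK !mxE mulrC.
Qed.

Lemma map_val_filter_gt (i : 'I_m) :
  map val [seq k : 'I_m <- enum 'I_m | (i < k)%N] = iota i.+1 (m - i.+1).
Proof.
rewrite -(filter_map _ (fun k : nat => (i < k)%N)) val_enum_ord.
have -> : iota 0 m = iota 0 i.+1 ++ iota i.+1 (m - i.+1).
  by rewrite -iotaD subnKC.
rewrite filter_cat (@eq_in_filter _ _ pred0) => [|k]; last first.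
  by rewrite mem_iota ltnS => /andP[_ /leq_gtF].
rewrite filter_pred0 (@eq_in_filter _ _ predT) ?filter_predT //.
by move=> k; rewrite mem_iota => /andP[].
Qed.

Lemma Qi_last (i : 'I_m) : i.+1 = m -> Qi A u i = 1%:M.
Proof.
move=> im; rewrite /Qi.
have := map_val_filter_gt i; rewrite im subnn.
by case: [seq k <- _ | _].
Qed.

Lemma QiS (i : 'I_m) (i1 : (i.+1 < m)%N) :
  Qi A u i = Qi A u (Ordinal i1) *m Pk A (Ordinal i1) (u 0 (Ordinal i1)).
Proof.
rewrite /Qi.
have -> : [seq k : 'I_m <- enum 'I_m | (i < k)%N] =
          Ordinal i1 :: [seq k : 'I_m <- enum 'I_m | (Ordinal i1 < k)%N].
  apply: (inj_map val_inj); rewrite map_cons !map_val_filter_gt /=.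
  by rewrite -(subnSK i1).
by [].
Qed.

Lemma Qi_mulmx (i : 'I_m) b : Qi A u i *m b =
  b - \sum_(k < m | (i < k)%N) (u 0 k * proj_coef k b) *: (Qi A u k *m acol A k).
Proof.
have [d] := ubnP (m - i); elim: d i => // d IH i ltd.
have [i1|/eqP im] := ltnP i.+1 m; last first.
  rewrite Qi_last ?mul1mx ?big_pred0 ?subr0 // => [k|]; last by have := ltn_ord i; lia.
  by apply/negbTE; rewrite -leqNgt; have := ltn_ord k; lia.
rewrite QiS -mulmxA Pk_mulmx mulmxBr IH /=; last by lia.
rewrite -scalemxAr [in RHS](bigD1 (Ordinal i1)) //= opprD addrA addrAC.
by congr (_ - _ - _); apply: eq_bigl => k; rewrite -val_eqE /=; lia.
Qed.

Local Notation dcoef := (alt_path_sum (fun k l : 'I_m => u 0 l * hkl A k l)).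

Lemma Qi_acol_sum (i : 'I_m) : Qi A u i *m acol A i = \sum_(j < m) dcoef i j *: acol A j.
Proof.
have [d] := ubnP (m - i); elim: d i => [|d IH] i ltd; first by have := ltn_ord i; lia.
rewrite Qi_mulmx.
under eq_bigr => k ik.
  rewrite proj_coef_acol IH; last by have := ltn_ord k; lia.
  over.
under [RHS]eq_bigr do rewrite alt_path_sum_rec scalerBl.
rewrite sumrB; congr (_ - _).
  rewrite (bigD1 i) //= eqxx scale1r big1 ?addr0 // => j ji.
  by rewrite eq_sym (negbTE ji) scale0r.
under [RHS]eq_bigr do rewrite scaler_suml.
rewrite exchange_big /=; apply: eq_bigr => k _.
by rewrite scaler_sumr; apply: eq_bigr => j _; rewrite scalerA.
Qed.

Lemma dijE (i j : 'I_m) : (i < j)%N -> dij A u i j = dcoef i j.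
Proof.
move=> ij; rewrite alt_path_sum_gt //; apply: eq_bigr => v _; congr (_ * _).
by apply: eq_bigr => t _; rewrite -(path_weightE _ i) [RHS]big_split size_tuple.
Qed.

Lemma compat_vecE i j : compat_vec A u i 0 j = dcoef i j.
Proof.
rewrite mxE; case: eqP => [->|/eqP ne]; first by rewrite alt_path_sum_id.
case: ltnP => [/dijE //|ji]; rewrite alt_path_sum_lt //.
by rewrite ltn_neqAle val_eqE ne.
Qed.

Lemma mulmx_tr_rV (c : 'rV[R]_m) : A^T *m c^T = \sum_(j < m) c 0 j *: acol A j.
Proof.
apply/matrixP => r s; rewrite (ord1 s) !mxE summxE; apply: eq_bigr => j _.
by rewrite !mxE mulrC.
Qed.

Lemma Qi_acolE i :
  Qi A u i *m acol A i = acol A i + \sum_(j < m | (i < j)%N) dij A u i j *: acol A j.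
Proof.
rewrite Qi_acol_sum (bigD1 i) //= alt_path_sum_id scale1r; congr (_ + _).
rewrite (bigID (fun j : 'I_m => (i < j)%N)) /= [X in _ + X]big1 ?addr0.
  apply: eq_big => j; first by rewrite andb_idl // => ij; rewrite -val_eqE /= gtn_eqF.
  by move=> /andP[_ /dijE ->].
move=> j /andP[ji]; rewrite -leqNgt => le_ji.
by rewrite alt_path_sum_lt ?scale0r // ltn_neqAle val_eqE ji.
Qed.

End Projections.

Theorem lemma3p7 (R : realFieldType) (m n : nat) (A : 'M[R]_(m, n))
  (hA : forall k : 'I_m, row k A != 0) (u : 'rV[R]_m) (i : 'I_m) :
  (forall x : 'cV[R]_n, in_null_perp A x ->
     (row i A) *m (Qi A u i)^T *m x =
     row i A *m x + \sum_(j < m | (i < j)%N) dij A u i j *: (row j A *m x))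
  /\ Qi A u i *m acol A i = A^T *m (compat_vec A u i)^T
  /\ Qi A u i *m acol A i = acol A i + \sum_(j < m | (i < j)%N) dij A u i j *: acol A j.
Proof.
split; last split; last exact: Qi_acolE.
- move=> x _.
  have -> : row i A *m (Qi A u i)^T = (Qi A u i *m acol A i)^T.
    by rewrite trmx_mul trmxK.
  rewrite Qi_acolE linearD linear_sum /= mulmxDl mulmx_suml trmxK.
  by congr (_ + _); apply: eq_bigr => j _; rewrite linearZ /= trmxK -scalemxAl.
- rewrite mulmx_tr_rV Qi_acol_sum.
  by apply: eq_bigr => j _; rewrite compat_vecE.
Qed.
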